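(* Fix $B\in\mathbb N$ and allocation functions $w_j$, $j\in[B]$, where $w_j$ maps $\mu^{j-1}=(\mu_1,\dots,\mu_{j-1})\in((\Delta_{\mathcal X})^K)^{j-1}$ to $\Delta_K$ ($w_1$ a constant). Consider the batched sampling scheme with horizon $T$: in batch $j=1,\dots,B$ each arm $a$ is pulled exactly $w_j(a)(Q^{j-1})\,T/B$ times (horizons $T$ are restricted to those for which these counts are integers), each pull of arm $a$ yields an independent sample from $\nu_a$, and $Q_{j,a}$ is the empirical distribution of the samples of arm $a$ in batch $j$ (a fixed arbitrary distribution if there are none), $Q_j=(Q_{j,a})_a$, $Q^j=(Q_1,\dots,Q_j)$. Then for every set $\Gamma\subseteq((\Delta_{\mathcal X})^K)^B$, $$\liminf_{T\to\infty}-\frac1T\log P_\nu\big[Q^B\in\Gamma\big]\ \ge\ \inf_{\mu^B\in\bar\Gamma}\ \frac1B\sum_{j=1}^B\sum_{a=1}^Kw_j(a)(\mu^{j-1})\,D(\mu_{j,a}\|\nu_a),$$ where $\bar\Gamma$ is the closure of $\Gamma$ and $\mu^B=(\mu_1,\dots,\mu_B)$ with $\mu_j=(\mu_{j,a})_a$.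
   Context: $\mathcal X$ is a finite set, $\Delta_{\mathcal X}$ the probability distributions on $\mathcal X$, $\Delta_K$ the simplex on $[K]$, $D$ the KL divergence. $\nu=(\nu_a)_{a\in[K]}$ is a bandit with each $\nu_a\in\Delta_{\mathcal X}$ having full support on $\mathcal X$; $P_\nu$ denotes the law of the sampling scheme under $\nu$. *)

From mathcomp Require Import all_boot all_order all_algebra.
From mathcomp Require Import all_classical all_reals all_analysis.
Set Implicit Arguments. Unset Strict Implicit. Unset Printing Implicit Defensive.
Import Order.TTheory GRing.Theory Num.Theory.
Import numFieldNormedType.Exports.
Local Open Scope ring_scope.
Local Open Scope classical_set_scope.

Notation config R X K B := {ptws 'I_B -> {ptws 'I_K -> {ptws X -> R}}}.

Section Batched.
Variables (R : realType) (X : finType) (K B : nat).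

Definition is_dist (p : X -> R) : Prop := (forall x, 0 <= p x) /\ \sum_(x : X) p x = 1.
Definition is_simplex (p : 'I_K -> R) : Prop :=
  (forall a, 0 <= p a) /\ \sum_(a < K) p a = 1.

(* KL divergence D(p||q) = sum_x p(x) log(p(x)/q(x)), with 0 log 0 = 0
   (finite here since q has full support in our uses). *)
Definition KL (p q : X -> R) : R :=
  \sum_(x : X) (if p x == 0 then 0 else p x * ln (p x / q x)).

(* a configuration mu^B = (mu_{j,a})_{j in [B], a in [K]} in ((Delta_X)^K)^B,
   seen inside the ambient space (R^X)^K)^B with its product (= Euclidean) topology *)
Local Notation config := {ptws 'I_B -> {ptws 'I_K -> {ptws X -> R}}}.
Definition is_config (mu : config) : Prop := forall j a, is_dist (mu j a).

(* allocation functions: w j maps the prefix mu^{j-1} = (mu_i)_{i < j}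
   (batches indexed from 0) to a vector indexed by arms *)
Definition alloc := forall j : 'I_B, ('I_j -> 'I_K -> X -> R) -> 'I_K -> R.

Definition prefix (j : 'I_B) (mu : 'I_B -> 'I_K -> X -> R) : 'I_j -> 'I_K -> X -> R :=
  fun i => mu (widen_ord (ltnW (ltn_ord j)) i).
Arguments prefix : clear implicits.

Definition rate (w : alloc) (nu : 'I_K -> X -> R) (mu : config) : R :=
  B%:R^-1 * \sum_(j < B) \sum_(a < K) w j (prefix j mu) a * KL (mu j a) (nu a).

(* Outcome space: for batch j and arm a, a stack of T i.i.d. samples of nu_a;
   the pulls of arm a in batch j read the first n_{j,a} <= T entries. *)
Definition outcome (T : nat) := {ffun 'I_B -> {ffun 'I_K -> {ffun 'I_T -> X}}}.

Definition outcome_prob (nu : 'I_K -> X -> R) (T : nat) (om : outcome T) : R :=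
  \prod_(j < B) \prod_(a < K) \prod_(t < T) nu a (om j a t).

(* number of pulls (the real number w_j(a)(Q^{j-1}) T / B, rounded down;
   for admissible T it is an integer, so no rounding happens) *)
Definition pulls_real (w : alloc) (T : nat) (j : 'I_B) (h : seq ('I_K -> X -> R))
  (a : 'I_K) : R :=
  w j (fun i : 'I_j => nth (fun _ _ => 0) h i) a * T%:R / B%:R.

Definition empirical (q0 : X -> R) (T n : nat) (row : 'I_T -> X) (x : X) : R :=
  if n == 0%N then q0 x
  else (#|[set t : 'I_T | (t < n)%N && (row t == x)]|)%:R / n%:R.

Definition batch (w : alloc) (q0 : X -> R) (T : nat) (om : outcome T)
  (m : nat) (h : seq ('I_K -> X -> R)) : 'I_K -> X -> R :=
  match @insub nat (fun k => (k < B)%N) 'I_B m with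
  | Some j => fun a => empirical q0 (Num.truncn (pulls_real w T j h a)) (om j a)
  | None => fun _ _ => 0
  end.

Fixpoint history (w : alloc) (q0 : X -> R) (T : nat) (om : outcome T) (m : nat)
  : seq ('I_K -> X -> R) :=
  match m with
  | 0%N => [::]
  | m'.+1 => let h := history w q0 om m' in rcons h (batch w q0 om m' h)
  end.

Definition QB (w : alloc) (q0 : X -> R) (T : nat) (om : outcome T) : config :=
  fun j => nth (fun _ _ => 0) (history w q0 om B) j.

Definition admissible (w : alloc) (q0 : X -> R) (T : nat) : Prop :=
  forall (om : outcome T) (j : 'I_B) (a : 'I_K),
    pulls_real w T j (history w q0 om j) a \is a Num.nat.

Definition probQ (w : alloc) (q0 : X -> R) (nu : 'I_K -> X -> R) (T : nat)
  (Gamma : set config) : R :=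
  \sum_(om : outcome T | `[< Gamma (QB w q0 om) >]) outcome_prob nu om.

(* -(1/T) log P_nu[Q^B in Gamma] in the extended reals (+oo if the probability is 0);
   non-admissible horizons (and T = 0) are assigned +oo, so that the liminf of this
   sequence over all T is the liminf over admissible horizons. *)
Definition neg_log_rate (w : alloc) (q0 : X -> R) (nu : 'I_K -> X -> R)
  (Gamma : set config) (T : nat) : \bar R :=
  if `[< admissible w q0 T >] && (0 < T)%N then
    let p := probQ w q0 nu T Gamma in
    if p == 0 then +oo%E else (- (T%:R^-1 * ln p))%:E
  else +oo%E.

End Batched.

From Pilot Require Import Defs.
From mathcomp Require Import all_boot all_order all_algebra.
From mathcomp Require Import all_classical all_reals all_analysis.
From mathcomp Require Import ring lra.
Import Order.TTheory GRing.Theory Num.Theory.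
Import numFieldNormedType.Exports.
Local Open Scope ring_scope.
Local Open Scope classical_set_scope.
Set Implicit Arguments. Unset Strict Implicit. Unset Printing Implicit Defensive.

(* Method of types.  Group the outcomes by their joint type: for each batch j,
   arm a and symbol x, the number of occurrences of x among the samples of arm
   a actually used in batch j.  Since the pull counts of batch j are functions
   of Q^{j-1}, the joint type determines the whole history, hence Q^B.  A type
   class whose empirical distributions are Q has probability at most
   exp(-sum_{j,a} n_{j,a} D(Q_{j,a} || nu_a)) = exp(-T rate(Q)), and there are
   at most (T+1)^{|X| K B} joint types, so
   P[Q^B in Gamma] <= (T+1)^{|X| K B} exp(-T inf_Gamma rate),
   and the polynomial factor disappears at the scale (1/T) log.  The infimum
   over Gamma dominates the one over its closure. *)

Section SumProd.
Variable R : numDomainType.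

Lemma ler_sum_subpred (I : finType) (P Q : pred I) (F : I -> R) :
  (forall i, 0 <= F i) -> (forall i, P i -> Q i) ->
  \sum_(i | P i) F i <= \sum_(i | Q i) F i.
Proof.
move=> F0 PQ; rewrite big_mkcond [leRHS]big_mkcond; apply: ler_sum => i _.
by case: ifP => [/PQ ->|_] //; case: ifP.
Qed.

Lemma sum_ffun_prod_le (I J : finType) (P : pred {ffun I -> J}) (g : I -> J -> R) :
  (forall i j, 0 <= g i j) ->
  \sum_(f | P f) \prod_i g i (f i) <= \prod_i \sum_j g i j.
Proof.
move=> g0; rewrite bigA_distr_bigA; apply: ler_sum_subpred => // f.
by apply: prodr_ge0 => i _.
Qed.

End SumProd.

Section PrefixType.
Variables (R : realType) (X : finType) (T : nat).
Implicit Types (n : nat) (r : 'I_T -> X).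

Definition prefix_count n r x : nat :=
  #|[set t : 'I_T | (t < n)%N && (r t == x)]|.

Definition same_prefix_type n r r' : bool :=
  [forall x, prefix_count n r x == prefix_count n r' x].

Lemma prefix_countE (q0 : X -> R) n r x :
  (prefix_count n r x)%:R = n%:R * empirical q0 n r x :> R.
Proof.
rewrite /empirical; have [->|n0] := posnP n; last first.
  by rewrite mulrC divfK // pnatr_eq0 -lt0n.
suff -> : prefix_count 0 r x = 0%N by rewrite mul0r.
by rewrite /prefix_count; apply: eq_card0 => t; apply/negP; rewrite in_setE.
Qed.

Lemma sum_prefix (f : X -> R) n r :
  \sum_(t < T | (t < n)%N) f (r t) = \sum_x (prefix_count n r x)%:R * f x.
Proof.
rewrite (partition_big r xpredT) //=; apply: eq_bigr => x _.
rewrite (eq_bigr (fun=> f x)); last by move=> t /andP[_ /eqP->].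
rewrite (eq_bigl (mem [set t : 'I_T | (t < n)%N && (r t == x)])).
  by rewrite sumr_const mulr_natl; congr (_ *+ _); apply: eq_card => t.
by move=> t /=; apply/idP/idP => [h|/set_mem //]; apply: mem_set.
Qed.

Lemma card_prefix_le n : (#|[pred t : 'I_T | (t < n)%N]| <= n)%N.
Proof.
case: n => [|n]; first by rewrite leqn0; apply/eqP; apply: eq_card0 => t.
rewrite -[leqRHS]card_ord.
apply: (@leq_card_in _ _ (fun t : 'I_T => (inord t : 'I_n.+1))) => t1 t2.
rewrite !inE => h1 h2 /(congr1 val); rewrite /= !inordK // => e.
exact: val_inj.
Qed.

Lemma prefix_count_le n r x : (prefix_count n r x <= T)%N.
Proof. by rewrite /prefix_count -[leqRHS]card_ord max_card. Qed.

Lemma empirical_ge0 (q0 : X -> R) n r x : (0 < n)%N -> 0 <= empirical q0 n r x.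
Proof. by move=> n0; rewrite /empirical gtn_eqF. Qed.

Lemma sum_empirical_le1 (q0 : X -> R) n r : (0 < n)%N -> \sum_x empirical q0 n r x <= 1.
Proof.
move=> n0; have nR0 : 0 < n%:R :> R by rewrite ltr0n.
rewrite -(ler_pM2l nR0) mulr1 mulr_sumr.
under eq_bigr do rewrite -(prefix_countE q0) -[_%:R]mulr1.
rewrite -sum_prefix sumr_const ler_nat; exact: card_prefix_le.
Qed.

Variables (p q0 : X -> R) (n : nat) (r0 : 'I_T -> X).
Hypothesis p_gt0 : forall x, 0 < p x.
Local Notation q := (empirical q0 n r0).

Lemma empirical_gt0_prefix r (t : 'I_T) :
  same_prefix_type n r r0 -> (t < n)%N -> 0 < q (r t).
Proof.
move=> /forallP/(_ (r t))/eqP rr0 tn.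
have n0 : 0 < n%:R :> R by rewrite ltr0n (leq_ltn_trans _ tn).
rewrite -(pmulr_rgt0 _ n0) -prefix_countE -rr0 ltr0n; apply/card_gt0P.
by exists t; apply: mem_set; rewrite /= tn eqxx.
Qed.

Lemma sum_prefix_ln_ratio r : same_prefix_type n r r0 ->
  \sum_(t < T | (t < n)%N) ln (p (r t) / q (r t)) = - (n%:R * KL q p).
Proof.
move=> /forallP rr0; rewrite (sum_prefix (fun x => ln (p x / q x))) /KL.
rewrite mulr_sumr -sumrN; apply: eq_bigr => x _.
rewrite (eqP (rr0 x)) (prefix_countE q0); have [->|qx0] := eqVneq (q x) 0.
  by rewrite !(mulr0, mul0r, oppr0).
have [n0|n0] := posnP n; first by rewrite n0 !mul0r oppr0.
have qx_gt0 : 0 < q x by rewrite lt0r qx0 empirical_ge0.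
by rewrite -[p x / q x]invf_div lnV ?posrE ?divr_gt0 // mulrN mulrA.
Qed.

Lemma prod_same_prefix_type r : same_prefix_type n r r0 ->
  \prod_(t < T) p (r t) =
  expR (- (n%:R * KL q p)) * \prod_(t < T) (if (t < n)%N then q (r t) else p (r t)).
Proof.
move=> rr0; rewrite (bigID (fun t : 'I_T => (t < n)%N)).
rewrite [in RHS](bigID (fun t : 'I_T => (t < n)%N)) /=.
rewrite mulrA; congr (_ * _); last by apply: eq_bigr => t /negbTE ->.
rewrite -(sum_prefix_ln_ratio rr0) expR_sum -big_split /=; apply: eq_bigr => t tn.
have q_gt0 := empirical_gt0_prefix rr0 tn.
by rewrite tn lnK ?posrE ?divr_gt0 // divfK // gt_eqF.
Qed.

(* The class is dominated by the product measure that draws the first n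
   entries from q instead of p, and q has total mass at most 1. *)
Lemma type_class_prob_le : is_dist p ->
  \sum_(r : {ffun 'I_T -> X} | same_prefix_type n r r0) \prod_(t < T) p (r t)
  <= expR (- (n%:R * KL q p)).
Proof.
move=> [p_ge0 p_sum1].
under eq_bigr => r rr0 do rewrite (prod_same_prefix_type rr0).
rewrite -mulr_sumr.
apply: ler_piMr; first exact: expR_ge0.
pose g (t : 'I_T) x := if (t < n)%N then q x else p x.
have g_ge0 t x : 0 <= g t x.
  by rewrite /g; case: ifP => // tn; exact/empirical_ge0/(leq_ltn_trans _ tn).
apply: le_trans (sum_ffun_prod_le _ g_ge0) _.
apply: prodr_ile1 => t _; apply/andP; split; first exact: sumr_ge0.
rewrite /g; have [tn|tn] := ltnP t n.
  exact: sum_empirical_le1 (leq_ltn_trans _ tn).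
by rewrite p_sum1.
Qed.

End PrefixType.

Section Scheme.
Variables (R : realType) (X : finType) (K B : nat).
Variables (nu : 'I_K -> X -> R) (w : alloc R X K B) (q0 : X -> R) (T : nat).
Implicit Types (om : outcome X K B T).

Local Notation no_batch := (fun (_ : 'I_K) (_ : X) => 0 : R).

Lemma size_history om m : size (history w q0 om m) = m.
Proof. by elim: m => //= m IH; rewrite size_rcons IH. Qed.

Lemma nth_history om m i : (i < m)%N ->
  nth no_batch (history w q0 om m) i = batch w q0 om i (history w q0 om i).
Proof.
elim: m => // m IH; rewrite ltnS leq_eqVlt => /orP[/eqP->|im] /=.
  by rewrite nth_rcons size_history ltnn eqxx.
by rewrite nth_rcons size_history im IH.
Qed.

Definition pulls om (j : 'I_B) (a : 'I_K) : nat :=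
  Num.truncn (pulls_real w T j (history w q0 om j) a).

Lemma QB_empirical om (j : 'I_B) :
  QB w q0 om j = fun a => empirical q0 (pulls om j a) (om j a).
Proof.
rewrite /QB nth_history // /batch.
by case: insubP => [j' _ /val_inj -> //|]; rewrite ltn_ord.
Qed.

Lemma prefix_QB om (j : 'I_B) :
  Defs.prefix (j := j) (QB w q0 om) =
  fun i : 'I_j => nth no_batch (history w q0 om j) i.
Proof.
apply: funext => i; rewrite /Defs.prefix /QB /= !nth_history //.
exact: ltn_trans (ltn_ord i) (ltn_ord j).
Qed.

Local Notation joint_types := {ffun 'I_B -> {ffun 'I_K -> {ffun X -> 'I_T.+1}}}.

(* Counts live in 'I_T.+1, so that joint types form a finite type with
   (T+1)^{|X| K B} elements. *)
Definition joint_type om : joint_types :=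
  [ffun j => [ffun a => [ffun x => inord (prefix_count (pulls om j a) (om j a) x)]]].

Lemma joint_type_count om om' j a x : joint_type om = joint_type om' ->
  prefix_count (pulls om j a) (om j a) x = prefix_count (pulls om' j a) (om' j a) x.
Proof.
move=> /(congr1 (fun c : joint_types => nat_of_ord (c j a x))).
by rewrite /= !ffunE !inordK // ltnS prefix_count_le.
Qed.

Lemma joint_type_history om om' m : joint_type om = joint_type om' ->
  history w q0 om m = history w q0 om' m.
Proof.
move=> same; elim: m => //= m IH; rewrite IH; congr rcons; rewrite /batch.
case: insubP => // j _ jm; apply: funext => a; apply: funext => x.
have := joint_type_count j a x same; rewrite /pulls jm IH /empirical /prefix_count.
by move->.
Qed.

Lemma joint_type_pulls om om' j a : joint_type om = joint_type om' ->
  pulls om j a = pulls om' j a.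
Proof. by move=> same; rewrite /pulls (joint_type_history _ same). Qed.

Hypothesis nu_dist : forall a, is_dist (nu a).
Hypothesis nu_gt0 : forall a x, 0 < nu a x.
Hypothesis T_admissible : admissible w q0 T.

Lemma outcome_prob_ge0 om : 0 <= outcome_prob nu om.
Proof. by do 3!(apply: prodr_ge0 => ? _); exact: ltW. Qed.

Definition same_prefix_types om0 om : bool :=
  [forall j, forall a, same_prefix_type (pulls om0 j a) (om j a) (om0 j a)].

Lemma sum_same_prefix_types om0 :
  \sum_(om | same_prefix_types om0 om) outcome_prob nu om =
  \prod_(j < B) \prod_(a < K)
     \sum_(r : {ffun 'I_T -> X} | same_prefix_type (pulls om0 j a) r (om0 j a))
       \prod_(t < T) nu a (r t).
Proof.
apply/esym; under eq_bigr do rewrite bigA_distr_big_dep.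
by rewrite bigA_distr_big_dep; apply: eq_big => // om.
Qed.

Lemma rate_QB om :
  T%:R * rate w nu (QB w q0 om) =
  \sum_(j < B) \sum_(a < K) (pulls om j a)%:R * KL (QB w q0 om j a) (nu a).
Proof.
rewrite /rate mulrA !mulr_sumr; apply: eq_bigr => j _.
rewrite mulr_sumr; apply: eq_bigr => a _.
by rewrite (truncnK (T_admissible om j a)) /pulls_real prefix_QB; ring.
Qed.

Lemma joint_type_class_prob_le om0 :
  \sum_(om | joint_type om == joint_type om0) outcome_prob nu om
  <= expR (- (T%:R * rate w nu (QB w q0 om0))).
Proof.
apply: le_trans
  (@ler_sum_subpred _ _ _ (same_prefix_types om0) _ outcome_prob_ge0 _) _.
  move=> om /eqP same; apply/forallP => j; apply/forallP => a; apply/forallP => x.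
  by rewrite -{1}(joint_type_pulls j a same) (joint_type_count j a x same).
rewrite sum_same_prefix_types rate_QB -sumrN expR_sum.
have row_ge0 j a :
    0 <= \sum_(r : {ffun 'I_T -> X} | same_prefix_type (pulls om0 j a) r (om0 j a))
           \prod_(t < T) nu a (r t).
  by apply: sumr_ge0 => r _; apply: prodr_ge0 => t _; exact: ltW.
apply: ler_prod => j _; rewrite prodr_ge0 //= -sumrN expR_sum.
apply: ler_prod => a _; rewrite row_ge0 QB_empirical /=.
exact: type_class_prob_le.
Qed.

Lemma probQ_le (Gamma : set (config R X K B)) (r : R) :
  (forall mu, Gamma mu -> r <= rate w nu mu) ->
  probQ w q0 nu T Gamma <= T.+1%:R ^+ (#|X| * K * B) * expR (- (T%:R * r)).
Proof.
move=> r_le_rate; rewrite /probQ (partition_big joint_type xpredT) //=.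
apply: le_trans (_ : _ <= \sum_(c : joint_types) expR (- (T%:R * r))) _.
  apply: ler_sum => c _.
  case: (pickP (fun om => `[< Gamma (QB w q0 om) >] && (joint_type om == c))).
    move=> om0 /andP[/asboolP Gom0 /eqP <-].
    apply: le_trans (@ler_sum_subpred _ _ _ (fun om => joint_type om == joint_type om0)
                       _ outcome_prob_ge0 _) _ => [om /andP[] //|].
    apply: le_trans (joint_type_class_prob_le om0) _.
    by rewrite ler_expR lerN2 ler_wpM2l // r_le_rate.
  by move=> none; rewrite big_pred0 ?expR_ge0.
rewrite sumr_const !card_ffun !card_ord -!expnM mulnA.
by rewrite -[leLHS]mulr_natr natrX mulrC.
Qed.

End Scheme.

(* ln (n+1) = 2 ln (sqrt (n+1)) <= 2 sqrt (n+1) <= e n as soon as n >= 8 / e^2. *)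
Lemma ln_div_cvg0 (R : realType) : ln n.+1%:R / n%:R @[n --> \oo] --> (0 : R).
Proof.
apply/cvgrPdist_le => e e0; near=> n.
have n_ge1 : 1 <= n%:R :> R by near: n; exact: nbhs_infty_ger.
have n_big : 8 / e ^+ 2 <= n%:R :> R by near: n; exact: nbhs_infty_ger.
have n_gt0 : 0 < n%:R :> R by lra.
set s := Num.sqrt (n.+1%:R : R).
have s_ge0 : 0 <= s := sqrtr_ge0 _.
have s2 : s ^+ 2 = n%:R + 1 by rewrite sqr_sqrtr // -addn1 natrD.
have s_gt0 : 0 < s by rewrite sqrtr_gt0 ltr0n.
have ln_le : ln (n.+1%:R : R) <= 2 * s.
  rewrite -[in leLHS]addn1 natrD -s2 lnXn // mulr_natl mulr2n.
  by have := ln_sublinear s_gt0; lra.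
have e2n : 8 <= n%:R * e ^+ 2 by rewrite -ler_pdivrMr ?exprn_gt0.
have two_s_le : 2 * s <= e * n%:R.
  rewrite -(ler_pXn2r (n := 2)) ?nnegrE ?mulr_ge0 ?(ltW e0) //; nra.
rewrite sub0r normrN ger0_norm ?divr_ge0 ?ln_ge0 ?ler1n //.
by rewrite ler_pdivrMr // (le_trans ln_le).
Unshelve. all: by end_near. Qed.

Lemma limn_einf_ge_near (R : realType) (u : (\bar R)^nat) (l : \bar R) :
  (\forall n \near \oo, l <= u n)%E -> (l <= limn_einf u)%E.
Proof.
move=> [N _ lu]; rewrite limn_einf_lim; apply: lime_ge; first exact: is_cvg_einfs.
near=> m; apply: le_ereal_inf_tmp => _ [k /= mk <-]; apply: lu => /=.
by apply: leq_trans mk; near: m; exists N.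
Unshelve. all: by end_near. Qed.

Lemma lee_real_lbound (R : realType) (x y : \bar R) :
  (forall r : R, r%:E <= x -> r%:E <= y)%E -> (x <= y)%E.
Proof.
case: x => [r||] xy; [exact: xy | | exact: leNye].
by rewrite (eq_infty (fun r => xy r (leey _))).
Qed.

Section RateBound.
Variables (R : realType) (X : finType) (K B : nat).
Variables (nu : 'I_K -> X -> R) (w : alloc R X K B) (q0 : X -> R).
Hypothesis nu_dist : forall a, is_dist (nu a).
Hypothesis nu_gt0 : forall a x, 0 < nu a x.
Variables (Gamma : set (config R X K B)) (r : R).
Hypothesis r_le_rate : forall mu, Gamma mu -> r <= rate w nu mu.

Lemma neg_log_rate_ge T :
  ((r - (#|X| * K * B)%:R * (ln T.+1%:R / T%:R))%:E
     <= neg_log_rate w q0 nu Gamma T)%E.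
Proof.
rewrite /neg_log_rate.
case: ifPn => [/andP[/asboolP T_adm T_gt0] /=|_]; last exact: leey.
set p := probQ w q0 nu T Gamma; have [_|p_neq0] := eqVneq p 0; first exact: leey.
rewrite lee_fin.
have p_gt0 : 0 < p.
  by rewrite lt0r p_neq0 sumr_ge0 // => om _; exact: outcome_prob_ge0.
have TR_gt0 : 0 < T%:R :> R by rewrite ltr0n.
have := probQ_le nu_dist nu_gt0 T_adm r_le_rate; rewrite -/p.
rewrite -ler_ln ?posrE ?mulr_gt0 ?exprn_gt0 ?expR_gt0 ?ltr0n //.
rewrite lnM ?posrE ?exprn_gt0 ?expR_gt0 ?ltr0n // expRK lnXn ?ltr0n // => ln_p_le.
have TL : T%:R * (ln T.+1%:R / T%:R) = ln T.+1%:R :> R.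
  by rewrite mulrC divfK ?gt_eqF.
rewrite -[leRHS]mulrN ler_pdivlMl // mulrBr mulrCA TL; lra.
Qed.

End RateBound.

Theorem mainTheorem11 (R : realType) (X : finType) (K B : nat)
  (hB : (0 < B)%N)
  (nu : 'I_K -> X -> R)
  (hnu : forall a, is_dist (nu a))
  (hnu_full : forall a x, 0 < nu a x)
  (w : alloc R X K B)
  (hw : forall (j : 'I_B) (p : 'I_j -> 'I_K -> X -> R),
          (forall i a, is_dist (p i a)) -> is_simplex (w j p))
  (q0 : X -> R) (hq0 : is_dist q0)
  (Gamma : set (config R X K B))
  (hGamma : Gamma `<=` @is_config R X K B) :
  (ereal_inf [set (rate w nu mu)%:E | mu in closure Gamma]
     <= limn_einf (neg_log_rate w q0 nu Gamma))%E.
Proof.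
apply: lee_real_lbound => r r_le_inf.
have r_le_rate mu : Gamma mu -> r <= rate w nu mu.
  move=> Gmu; rewrite -lee_fin (le_trans r_le_inf) //.
  by apply: ereal_inf_lbound; exists mu => //; exact: subset_closure.
apply/lee_subgt0Pr => e e0; apply: limn_einf_ge_near.
have M_ln_div_cvg0 : (#|X| * K * B)%:R * (ln n.+1%:R / n%:R) @[n --> \oo] --> (0 : R).
  by rewrite -(mulr0 (#|X| * K * B)%:R); apply: cvgMl_tmp; exact: ln_div_cvg0.
have /cvgrPdist_le/(_ e e0) := M_ln_div_cvg0.
apply: filterS => T; rewrite sub0r normrN => /ler_normlW small.
apply: le_trans (neg_log_rate_ge q0 hnu hnu_full r_le_rate T).
by rewrite lee_fin lerB.
Qed.
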